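(* Let $\mathbf{C}=\mathbf{C}_1\,\dot\cup\,\mathbf{C}_2$ and $\mathbf{B}\in\dot{\mathbb{P}}(\mathbb{L}(\mathbf{C}_1))$ with $|\mathbf{B}|=|\mathbf{C}_1|$. Suppose every variable $X\in\mathbf{C}_2$ has a positive monotonic effect on $D$ relative to $\mathbf{C}$. If for some $\omega^*\in\Omega$ (i) $D_{\mathbf{B}=\mathbf{1},\mathbf{C}_2=\mathbf{0}}(\omega^* )=1$ and (ii) for all $L\in\mathbf{B}$, $D_{\mathbf{B}\setminus\{L\}=\mathbf{1},L=0,\mathbf{C}_2=\mathbf{0}}(\omega^* )=0$, then $\mathbf{B}$ is a minimal sufficient cause for $D$ relative to $\mathbf{C}$ for $\omega^*$.
   Context: Events are binary random variables on a population $\Omega$; $\overline{X}=1-X$; $\mathbb{L}(\mathbf{C})=\mathbf{C}\cup\{\overline{X}:X\in\mathbf{C}\}$; $\dot{\mathbb{P}}(\mathbb{L}(\mathbf{C}))$ is the set of subsets of $\mathbb{L}(\mathbf{C})$ not containing both $X$ and $\overline{X}$; $(L)_{\mathbf{c}}$ is the value of literal $L$ under assignment $\mathbf{c}$; $\bigwedge(\mathbf{B})=\min_{L\in\mathbf{B}}L$. Potential outcomes $D_{\mathbf{c}}(\omega)\in\{0,1\}$. Since $|\mathbf{B}|=|\mathbf{C}_1|$, setting literals of $\mathbf{B}$ determines an assignment to $\mathbf{C}_1$. A variable $X\in\mathbf{C}$ has a positive monotonic effect on $D$ relative to $\mathbf{C}$ if for all $\omega$ and all values of the other variables of $\mathbf{C}$,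 the potential outcome with $X=1$ is at least that with $X=0$. $\mathbf{B}\subseteq\mathbb{L}(\mathbf{C})$ is a sufficient cause for $D$ relative to $\mathbf{C}$ for $\omega^*$ if some $\mathbf{c}^*$ has $(\bigwedge(\mathbf{B}))_{\mathbf{c}^*}=1$ and $D_{\mathbf{c}}(\omega^* )=1$ for every $\mathbf{c}$ with $(\bigwedge(\mathbf{B}))_{\mathbf{c}}=1$; it is minimal if no proper subset of $\mathbf{B}$ is a sufficient cause for $D$ relative to $\mathbf{C}$ for $\omega^*$. *)

From mathcomp Require Import all_boot.
Set Implicit Arguments. Unset Strict Implicit. Unset Printing Implicit Defensive.

(* Variables form a finite type V (the set C = all of V).
   A literal is a pair (X, b) : V * bool; (X, true) stands for X and
   (X, false) for its complement 1 - X.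
   Potential outcomes: D w c = D_c(w). *)

Definition lit_val (V : finType) (L : V * bool) (c : {ffun V -> bool}) : bool :=
  c L.1 == L.2.

(* (/\ B)_c = 1 : every literal in B takes value 1 under c (min over empty set is 1). *)
Definition conj_true (V : finType) (B : {set V * bool}) (c : {ffun V -> bool}) : Prop :=
  forall L, L \in B -> lit_val L c.

Definition consistent (V : finType) (B : {set V * bool}) : Prop :=
  forall X : V, ~ ((X, true) \in B /\ (X, false) \in B).

Definition lits_over (V : finType) (C1 : {set V}) (B : {set V * bool}) : Prop :=
  forall L, L \in B -> L.1 \in C1.

Definition neg_lit (V : finType) (L : V * bool) : V * bool := (L.1, ~~ L.2).

Definition pos_monotonic (V : finType) (Omega : Type)
  (D : Omega -> {ffun V -> bool} -> bool) (X : V) : Prop :=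
  forall (w : Omega) (c : {ffun V -> bool}),
    D w [ffun Y => if Y == X then false else c Y] <=
    D w [ffun Y => if Y == X then true else c Y].

Definition sufficient_cause (V : finType) (Omega : Type)
  (D : Omega -> {ffun V -> bool} -> bool) (w : Omega) (B : {set V * bool}) : Prop :=
  (exists c, conj_true B c) /\
  (forall c, conj_true B c -> D w c = true).

Definition minimal_sufficient_cause (V : finType) (Omega : Type)
  (D : Omega -> {ffun V -> bool} -> bool) (w : Omega) (B : {set V * bool}) : Prop :=
  sufficient_cause D w B /\
  (forall B' : {set V * bool}, B' \proper B -> ~ sufficient_cause D w B').

From mathcomp Require Import all_boot.
Set Implicit Arguments. Unset Strict Implicit. Unset Printing Implicit Defensive.

(* Assignments are modified by two operations: [set_var c X b] overrides the
   value of one variable and [zero_on S c] sets every variable of S to 0.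
   - Sufficiency: zeroing C2 preserves the literals of B (which live on C1,
     disjoint from C2), so (i) gives D = 1 at [zero_on C2 c]; since zeroing a
     set of positively monotonic variables can only decrease D, D = 1 at c.
   - Minimality: for B' strictly inside B pick L in B \ B'.  Starting from an
     assignment making B true, zero C2 and flip the variable of L; this makes
     B \ {L} true, L false and C2 zero, so (ii) gives D = 0 there, while B'
     (contained in B \ {L}) is true there: B' is not sufficient. *)

Section Assignments.

Variable V : finType.
Implicit Types (c : {ffun V -> bool}) (A B : {set V * bool}) (S : {set V}).

Definition set_var c (X : V) (b : bool) : {ffun V -> bool} :=
  [ffun Y => if Y == X then b else c Y].

Definition zero_on S c : {ffun V -> bool} :=
  [ffun Y => if Y \in S then false else c Y].

Lemma consistent_lit_eq B (L L' : V * bool) :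
  consistent B -> L \in B -> L' \in B -> L.1 = L'.1 -> L = L'.
Proof.
case: L L' => X b [X' b'] /= consB HL HL' eqX; subst X'.
by case: b b' HL HL' => [] [] // HL HL'; case: (consB X); split.
Qed.

Definition sat_assign B : {ffun V -> bool} :=
  [ffun X => if [pick L in B | L.1 == X] is Some L then L.2 else false].

Lemma conj_true_sat_assign B : consistent B -> conj_true B (sat_assign B).
Proof.
move=> consB L HL; rewrite /lit_val ffunE.
case: pickP => [L' /andP [HL' /eqP eqX] | /(_ L)]; last by rewrite HL eqxx.
by rewrite (consistent_lit_eq consB HL' HL eqX).
Qed.

Lemma conj_true_subset A B c : A \subset B -> conj_true B c -> conj_true A c.
Proof. by move=> /subsetP sAB trueB L /sAB; apply: trueB. Qed.

Lemma conj_true_set_var A c X b :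
  (forall L, L \in A -> L.1 != X) -> conj_true A c -> conj_true A (set_var c X b).
Proof.
move=> freeX trueA L HL; rewrite /lit_val ffunE (negbTE (freeX L HL)).
exact: trueA.
Qed.

Lemma conj_true_zero_on A S c :
  (forall L, L \in A -> L.1 \notin S) -> conj_true A c -> conj_true A (zero_on S c).
Proof.
move=> freeS trueA L HL; rewrite /lit_val ffunE (negbTE (freeS L HL)).
exact: trueA.
Qed.

Lemma set_var_id c X : set_var c X (c X) = c.
Proof. by apply/ffunP => Y; rewrite ffunE; case: (Y =P X) => // ->. Qed.

Lemma zero_on_set_var S c X :
  X \in S -> zero_on S c = set_var (zero_on (S :\ X) c) X false.
Proof.
move=> HX; apply/ffunP => Y; rewrite !ffunE !inE.
by case: (Y =P X) => [-> | _]; rewrite ?HX.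
Qed.

Variables (Omega : Type) (D : Omega -> {ffun V -> bool} -> bool) (w : Omega).

Lemma pos_monotonic_set_false c X :
  pos_monotonic D X -> D w (set_var c X false) <= D w c.
Proof.
move=> monX; case cX: (c X); last by rewrite -cX set_var_id.
suff E : set_var c X true = c by rewrite -{2}E; apply: monX.
by rewrite -cX set_var_id.
Qed.

Lemma zero_on_monotonic S c :
  (forall X, X \in S -> pos_monotonic D X) -> D w (zero_on S c) <= D w c.
Proof.
move: {2}#|S| (erefl #|S|) => n; elim: n S => [|n IH] S cardS monS.
  have -> : zero_on S c = c.
    by apply/ffunP => Y; rewrite ffunE (cards0_eq cardS) inE.
  exact: leqnn.
have /set0Pn [X HX] : S != set0 by rewrite -card_gt0 cardS.
rewrite (zero_on_set_var c HX).
apply: leq_trans (pos_monotonic_set_false _ (monS X HX)) _.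
apply: IH => [|Y]; first by move: cardS; rewrite (cardsD1 X) HX => -[].
by rewrite inE => /andP [_ /monS].
Qed.

Lemma zero_on_zero S c X : X \in S -> zero_on S c X = false.
Proof. by rewrite ffunE => ->. Qed.

End Assignments.

Section MinimalSufficientCause.

Variables (V : finType) (Omega : Type) (D : Omega -> {ffun V -> bool} -> bool).
Variables (w : Omega) (C2 : {set V}) (B : {set V * bool}).
Hypothesis consB : consistent B.
Hypothesis offC2 : forall L, L \in B -> L.1 \notin C2.

Lemma sufficient_of_zeroed :
  (forall X, X \in C2 -> pos_monotonic D X) ->
  (forall c, conj_true B c -> (forall X, X \in C2 -> c X = false) -> D w c = true) ->
  sufficient_cause D w B.
Proof.
move=> monC2 suffB; split=> [|c trueB].
  by exists (sat_assign B); apply: conj_true_sat_assign.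
have := zero_on_monotonic w c monC2.
rewrite suffB => [||X].
- by case: (D w c).
- exact: (conj_true_zero_on offC2).
- exact: zero_on_zero.
Qed.

(* If each literal of B is needed at C2 = 0, no proper subset of B is
   sufficient: falsify the missing literal, keep the others true. *)
Lemma proper_not_sufficient (B' : {set V * bool}) :
  (forall L, L \in B -> forall c, conj_true (B :\ L) c -> lit_val (neg_lit L) c ->
     (forall X, X \in C2 -> c X = false) -> D w c = false) ->
  B' \proper B -> ~ sufficient_cause D w B'.
Proof.
move=> necB /properP [subB' [L HL notHL]] [_ suffB'].
pose c := set_var (zero_on C2 (sat_assign B)) L.1 (~~ L.2).
have trueBL : conj_true (B :\ L) c.
  apply: conj_true_set_var => [L' | L']; rewrite !inE => /andP [neL HL'].
    by apply: contra neL => /eqP eqX; rewrite (consistent_lit_eq consB HL' HL eqX).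
  exact: (conj_true_zero_on offC2 (conj_true_sat_assign consB) HL').
have : D w c = false.
  apply: (necB L HL c trueBL); first by rewrite /lit_val ffunE eqxx.
  move=> X HX; rewrite ffunE; case: (X =P L.1) => [eqX | _]; last exact: zero_on_zero.
  by move: (offC2 HL); rewrite -eqX HX.
rewrite suffB' //; apply: conj_true_subset trueBL; apply/subsetP => L' HL'B'.
by rewrite !inE (subsetP subB' _ HL'B') andbT; apply: contraNneq notHL => <-.
Qed.

End MinimalSufficientCause.

Theorem mainTheorem9 (V : finType) (Omega : Type)
  (D : Omega -> {ffun V -> bool} -> bool)
  (C1 C2 : {set V}) (B : {set V * bool}) (w : Omega) :
  C1 :&: C2 = set0 ->
  C1 :|: C2 = [set: V] ->
  lits_over C1 B ->
  consistent B ->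
  #|B| = #|C1| ->
  (forall X, X \in C2 -> pos_monotonic D X) ->
  (* (i) D_{B=1, C2=0}(w) = 1 *)
  (forall c : {ffun V -> bool},
     conj_true B c -> (forall X, X \in C2 -> c X = false) -> D w c = true) ->
  (* (ii) for all L in B, D_{B\{L}=1, L=0, C2=0}(w) = 0 *)
  (forall L, L \in B -> forall c : {ffun V -> bool},
     conj_true (B :\ L) c -> lit_val (neg_lit L) c ->
     (forall X, X \in C2 -> c X = false) -> D w c = false) ->
  minimal_sufficient_cause D w B.
Proof.
move=> /eqP; rewrite setI_eq0 => disjC _ overB consB _ monC2 suffB necB.
have offC2 L : L \in B -> L.1 \notin C2.
  by move=> /overB HL; rewrite (disjointFr disjC HL).
split; first exact: (sufficient_of_zeroed consB offC2 monC2 suffB).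
by move=> B'; apply: (proper_not_sufficient consB offC2 necB).
Qed.
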